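(* Let $p,p'$ be processes (of possibly different LTSs) such that $p$ subsumes $p'$. If $\varphi\in\mathrm{sHML}$ is closed and $p\in[\![\varphi]\!]_B$, then $p'\in[\![\varphi]\!]_B$. Dually, if $\varphi\in\mathrm{cHML}$ is closed and $p\notin[\![\varphi]\!]_B$, then $p'\notin[\![\varphi]\!]_B$.
   Context: Fix a finite set $\mathrm{Act}$ of actions, $\tau\notin\mathrm{Act}$. $\mathrm{sHML}$: $\varphi::=\mathrm{tt}\mid\mathrm{ff}\mid[A]\varphi\mid\varphi\wedge\varphi\mid\max X.\varphi\mid X$; $\mathrm{cHML}$: $\varphi::=\mathrm{tt}\mid\mathrm{ff}\mid\langle A\rangle\varphi\mid\varphi\vee\varphi\mid\min X.\varphi\mid X$ ($A\subseteq\mathrm{Act}$, guarded). Branching-time semantics over an LTS $(\mathrm{Proc},\mathrm{Act}\cup\{\tau\},\to)$, with $p\overset{a}{\Longrightarrow}q$ iff $p(\xrightarrow{\tau})^*\xrightarrow{a}(\xrightarrow{\tau})^*q$ and $p\overset{a_1\cdots a_k}{\Longrightarrow}q$ the composition: $[\![\mathrm{tt}]\!]_B=\mathrm{Proc}$, $[\![\mathrm{ff}]\!]_B=\emptyset$, $\vee,\wedge$ union/intersection, $[\![\langle A\rangle\varphi,\rho]\!]_B=\{p\mid\exists a\in A,\exists q.\ p\overset{a}{\Longrightarrow}q\wedge q\in[\![\varphi,\rho]\!]_B\}$, $[\![[A]\varphi,\rho]\!]_B=\{p\mid\forall a\in A,\forall q.\ p\overset{a}{\Longrightarrow}q\Rightarrow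 q\in[\![\varphi,\rho]\!]_B\}$, $\min/\max$ as least/greatest fixpoints, $[\![X,\rho]\!]_B=\rho(X)$. A process $p$ produces a finite trace $s\in\mathrm{Act}^*$ if $p\overset{s}{\Longrightarrow}q$ for some $q$, and produces an infinite trace $a_1a_2\cdots$ if there are $p=p_0,p_1,p_2,\ldots$ with $p_{i-1}\overset{a_i}{\Longrightarrow}p_i$ for all $i\ge1$. $p$ subsumes $p'$ if $p$ produces every finite or infinite trace that $p'$ produces. *)

From mathcomp Require Import all_boot.
From Stdlib Require Import Relations.

Set Implicit Arguments.
Unset Strict Implicit.
Unset Printing Implicit Defensive.

Definition var := nat.

(* The label [None] plays the role of the silent action tau. *)
Record LTS (Act : finType) := {
  Proc :> Type;
  trans : Proc -> option Act -> Proc -> Prop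
}.

Section Weak.
Variables (Act : finType) (L : LTS Act).

Definition tau_step (p q : L) : Prop := trans p None q.
Definition tau_star : relation L := clos_refl_trans L tau_step.

Definition weak (p : L) (a : Act) (q : L) : Prop :=
  exists p1 p2, tau_star p p1 /\ trans p1 (Some a) p2 /\ tau_star p2 q.

Fixpoint weak_seq (p : L) (s : seq Act) (q : L) : Prop :=
  match s with
  | [::] => p = q
  | a :: s' => exists r, weak p a r /\ weak_seq r s' q
  end.

Definition produces_fin (p : L) (s : seq Act) : Prop := exists q, weak_seq p s q.

(* infinite trace a_1 a_2 ... represented by t : nat -> Act with t i = a_(i+1) *)
Definition produces_inf (p : L) (t : nat -> Act) : Prop :=
  exists ps : nat -> L, ps 0 = p /\ forall i, weak (ps i) (t i) (ps i.+1).
End Weak.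

Definition subsumes (Act : finType) (L L' : LTS Act) (p : L) (p' : L') : Prop :=
  (forall s, produces_fin p' s -> produces_fin p s) /\
  (forall t, produces_inf p' t -> produces_inf p t).

Definition gfp (P : Type) (F : (P -> Prop) -> (P -> Prop)) : P -> Prop :=
  fun p => exists S : P -> Prop, (forall q, S q -> F S q) /\ S p.
Definition lfp (P : Type) (F : (P -> Prop) -> (P -> Prop)) : P -> Prop :=
  fun p => forall S : P -> Prop, (forall q, F S q -> S q) -> S p.

Definition env_update (P : Type) (rho : var -> P -> Prop) (X : var) (S : P -> Prop)
  : var -> P -> Prop := fun Y => if Y == X then S else rho Y.

Inductive sHML (Act : finType) : Type :=
| s_tt | s_ff
| s_box (A : {set Act}) (phi : sHML Act)
| s_and (phi psi : sHML Act)
| s_max (X : var) (phi : sHML Act)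
| s_var (X : var).

Inductive cHML (Act : finType) : Type :=
| c_tt | c_ff
| c_dia (A : {set Act}) (phi : cHML Act)
| c_or (phi psi : cHML Act)
| c_min (X : var) (phi : cHML Act)
| c_var (X : var).

Arguments s_tt {Act}. Arguments s_ff {Act}. Arguments s_var {Act}.
Arguments c_tt {Act}. Arguments c_ff {Act}. Arguments c_var {Act}.

Fixpoint s_free (Act : finType) (X : var) (phi : sHML Act) : Prop :=
  match phi with
  | s_tt | s_ff => False
  | s_box _ f => s_free X f
  | s_and f g => s_free X f \/ s_free X g
  | s_max Y f => Y <> X /\ s_free X f
  | s_var Y => Y = X
  end.
Fixpoint c_free (Act : finType) (X : var) (phi : cHML Act) : Prop :=
  match phi with
  | c_tt | c_ff => False
  | c_dia _ f => c_free X f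
  | c_or f g => c_free X f \/ c_free X g
  | c_min Y f => Y <> X /\ c_free X f
  | c_var Y => Y = X
  end.
Definition s_closed (Act : finType) (phi : sHML Act) := forall X, ~ s_free X phi.
Definition c_closed (Act : finType) (phi : cHML Act) := forall X, ~ c_free X phi.

Fixpoint s_unguarded (Act : finType) (X : var) (phi : sHML Act) : Prop :=
  match phi with
  | s_tt | s_ff | s_box _ _ => False
  | s_and f g => s_unguarded X f \/ s_unguarded X g
  | s_max Y f => Y <> X /\ s_unguarded X f
  | s_var Y => Y = X
  end.
Fixpoint c_unguarded (Act : finType) (X : var) (phi : cHML Act) : Prop :=
  match phi with
  | c_tt | c_ff | c_dia _ _ => False
  | c_or f g => c_unguarded X f \/ c_unguarded X g
  | c_min Y f => Y <> X /\ c_unguarded X f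
  | c_var Y => Y = X
  end.
Fixpoint s_guarded (Act : finType) (phi : sHML Act) : Prop :=
  match phi with
  | s_tt | s_ff | s_var _ => True
  | s_box _ f => s_guarded f
  | s_and f g => s_guarded f /\ s_guarded g
  | s_max X f => ~ s_unguarded X f /\ s_guarded f
  end.
Fixpoint c_guarded (Act : finType) (phi : cHML Act) : Prop :=
  match phi with
  | c_tt | c_ff | c_var _ => True
  | c_dia _ f => c_guarded f
  | c_or f g => c_guarded f /\ c_guarded g
  | c_min X f => ~ c_unguarded X f /\ c_guarded f
  end.

Fixpoint sem_s (Act : finType) (L : LTS Act) (phi : sHML Act)
  (rho : var -> L -> Prop) : L -> Prop :=
  match phi with
  | s_tt => fun _ => True
  | s_ff => fun _ => False
  | s_box A f => fun p => forall a, a \in A -> forall q, weak p a q -> sem_s f rho q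
  | s_and f g => fun p => sem_s f rho p /\ sem_s g rho p
  | s_max X f => gfp (fun S => sem_s f (env_update rho X S))
  | s_var X => rho X
  end.
Fixpoint sem_c (Act : finType) (L : LTS Act) (phi : cHML Act)
  (rho : var -> L -> Prop) : L -> Prop :=
  match phi with
  | c_tt => fun _ => True
  | c_ff => fun _ => False
  | c_dia A f => fun p => exists a, a \in A /\ exists q, weak p a q /\ sem_c f rho q
  | c_or f g => fun p => sem_c f rho p \/ sem_c g rho p
  | c_min X f => lfp (fun S => sem_c f (env_update rho X S))
  | c_var X => rho X
  end.

(* the empty environment (semantics of closed formulas is independent of it) *)
Definition env0 (Act : finType) (L : LTS Act) : var -> L -> Prop := fun _ _ => False.

From mathcomp Require Import all_boot.

Set Implicit Arguments.
Unset Strict Implicit.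
Unset Printing Implicit Defensive.

(* Only inclusion of finite weak traces is needed, and neither closedness nor
   guardedness: the result holds for every formula, provided the environments
   are suitably related.  For predicates S on L and S' on L' we consider
   - [box_sim S S']: for every trace s, if all s-derivatives of p lie in S,
     then all s-derivatives of p' lie in S' (the invariant for sHML);
   - [dia_sim S S']: every s-derivative of p' lying in S' is matched by some
     s-derivative of p lying in S (the invariant for cHML).
   By structural induction, [box_sim] (resp. [dia_sim]) between environments
   lifts to the semantics of every sHML (resp. cHML) formula.  Boxes and
   diamonds extend the trace by one action ([weak_seq_rcons]); fixpoints use
   the Knaster-Tarski facts [gfp_unfold] / [lfp_fold] together with the
   monotonicity of the semantics in the environment.  The theorem is the
   instance at the empty environment and the empty trace. *)

Section Fixpoints.
Variable P : Type.

Definition monotone (F : (P -> Prop) -> (P -> Prop)) : Prop :=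
  forall S T : P -> Prop, (forall x, S x -> T x) -> forall x, F S x -> F T x.

Lemma gfp_unfold (F : (P -> Prop) -> (P -> Prop)) :
  monotone F -> forall x, gfp F x -> F (gfp F) x.
Proof.
move=> monoF x [S [postS Sx]]; apply: (monoF S) (postS x Sx) => y Sy.
by exists S.
Qed.

Lemma lfp_fold (F : (P -> Prop) -> (P -> Prop)) :
  monotone F -> forall x, F (lfp F) x -> lfp F x.
Proof.
move=> monoF x Fx S preS; apply: (preS); apply: (monoF (lfp F)) Fx => y lfp_y.
exact: lfp_y S preS.
Qed.

End Fixpoints.

Lemma env_update_rel (P P' : Type) (R : (P -> Prop) -> (P' -> Prop) -> Prop)
    (rho : var -> P -> Prop) (rho' : var -> P' -> Prop) X S S' :
  (forall Y, R (rho Y) (rho' Y)) -> R S S' ->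
  forall Y, R (env_update rho X S Y) (env_update rho' X S' Y).
Proof. by move=> Hrho HS Y; rewrite /env_update; case: (Y == X). Qed.

Section Semantics.
Variables (Act : finType) (L : LTS Act).

Definition env_incl (rho1 rho2 : var -> L -> Prop) : Prop :=
  forall X q, rho1 X q -> rho2 X q.

Lemma env_incl_update (rho1 rho2 : var -> L -> Prop) X (S T : L -> Prop) :
  env_incl rho1 rho2 -> (forall q, S q -> T q) ->
  env_incl (env_update rho1 X S) (env_update rho2 X T).
Proof.
move=> H12 ST.
exact: (@env_update_rel L L (fun S T => forall q, S q -> T q) rho1 rho2 X S T).
Qed.

Lemma weak_seq_rcons (s : seq Act) (a : Act) (p r : L) :
  weak_seq p (rcons s a) r <-> exists q, weak_seq p s q /\ weak q a r.
Proof.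
elim: s p => [|b s IH] p /=.
- split=> [[r' [Hw <-]]|[q [<- Hw]]]; first by exists p.
  by exists r.
- split=> [[r1 [H1 /IH [q [Hq Ha]]]]|[q [[r1 [H1 Hq]] Ha]]].
  + by exists q; split=> //; exists r1.
  + by exists r1; split=> //; apply/IH; exists q.
Qed.

Lemma sem_s_mono (phi : sHML Act) (rho1 rho2 : var -> L -> Prop) :
  env_incl rho1 rho2 -> forall q, sem_s phi rho1 q -> sem_s phi rho2 q.
Proof.
elim: phi rho1 rho2 => [| |A f IH|f IHf g IHg|X f IH|X] rho1 rho2 H12 q //=.
- by move=> Hq a Ha q' Hw; apply: (IH rho1) (Hq a Ha q' Hw).
- by case=> Hf Hg; split; [apply: (IHf rho1) | apply: (IHg rho1)].
- move=> [S [postS Sq]]; exists S; split=> // q' /postS.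
  by apply: IH; apply: env_incl_update.
- exact: H12.
Qed.

Lemma sem_c_mono (phi : cHML Act) (rho1 rho2 : var -> L -> Prop) :
  env_incl rho1 rho2 -> forall q, sem_c phi rho1 q -> sem_c phi rho2 q.
Proof.
elim: phi rho1 rho2 => [| |A f IH|f IHf g IHg|X f IH|X] rho1 rho2 H12 q //=.
- move=> [a [Ha [q' [Hw Hf]]]]; exists a; split=> //; exists q'; split=> //.
  exact: (IH rho1).
- by case=> [Hf|Hg]; [left; apply: (IHf rho1) | right; apply: (IHg rho1)].
- move=> Hlfp S preS; apply: Hlfp => q' Hq'; apply: preS.
  by apply: (IH (env_update rho1 X S)) Hq'; apply: env_incl_update.
- exact: H12.
Qed.

Lemma sem_s_update_monotone (f : sHML Act) (rho : var -> L -> Prop) (X : var) :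
  monotone (fun S => sem_s f (env_update rho X S)).
Proof. by move=> S T ST; apply: sem_s_mono; apply: env_incl_update. Qed.

Lemma sem_c_update_monotone (f : cHML Act) (rho : var -> L -> Prop) (X : var) :
  monotone (fun S => sem_c f (env_update rho X S)).
Proof. by move=> S T ST; apply: sem_c_mono; apply: env_incl_update. Qed.

End Semantics.

Section Transfer.
Variables (Act : finType) (L L' : LTS Act) (p : L) (p' : L').

Hypothesis trace_incl : forall s, produces_fin p' s -> produces_fin p s.

Definition box_sim (S : L -> Prop) (S' : L' -> Prop) : Prop :=
  forall s q', (forall q, weak_seq p s q -> S q) -> weak_seq p' s q' -> S' q'.

Definition dia_sim (S : L -> Prop) (S' : L' -> Prop) : Prop :=
  forall s q', S' q' -> weak_seq p' s q' -> exists q, weak_seq p s q /\ S q.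

Lemma box_sim_empty : box_sim (fun _ => False) (fun _ => False).
Proof.
move=> s q' Hall Hs'; have [q Hq] := trace_incl (ex_intro _ q' Hs').
exact: Hall Hq.
Qed.

Lemma box_sim_sem (phi : sHML Act) (rho : var -> L -> Prop)
    (rho' : var -> L' -> Prop) :
  (forall X, box_sim (rho X) (rho' X)) -> box_sim (sem_s phi rho) (sem_s phi rho').
Proof.
elim: phi rho rho' => [| |A f IH|f IHf g IHg|X f IH|X] rho rho' Henv s q' Hall Hs' //=.
- exact: box_sim_empty Hall Hs'.
- move=> a Ha r' Hw; apply: (IH rho rho' Henv (rcons s a)).
  + by move=> r /weak_seq_rcons [q [Hq Hr]]; apply: Hall Hq a Ha r Hr.
  + by apply/weak_seq_rcons; exists q'.
- split.
  + by apply: (IHf rho rho' Henv s) Hs' => q /Hall [].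
  + by apply: (IHg rho rho' Henv s) Hs' => q /Hall [].
- set G := gfp (fun S => sem_s f (env_update rho X S)).
  pose G' q' := exists s, weak_seq p' s q' /\ forall q, weak_seq p s q -> G q.
  have simG : box_sim G G' by move=> t r' HG Ht; exists t.
  exists G'; split; last by exists s.
  have envG := @env_update_rel _ _ box_sim rho rho' X G G' Henv simG.
  move=> r' [t [Ht HG]]; apply: (IH _ _ envG t) Ht.
  by move=> q /HG; apply: gfp_unfold; apply: sem_s_update_monotone.
- exact: Henv Hall Hs'.
Qed.

Lemma dia_sim_sem (phi : cHML Act) (rho : var -> L -> Prop)
    (rho' : var -> L' -> Prop) :
  (forall X, dia_sim (rho X) (rho' X)) -> dia_sim (sem_c phi rho) (sem_c phi rho').
Proof.
elim: phi rho rho' => [| |A f IH|f IHf g IHg|X f IH|X] rho rho' Henv s q' Hq' Hs' //=.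
- by have [q Hq] := trace_incl (ex_intro _ q' Hs'); exists q.
- move: Hq' => [a [Ha [r' [Hw Hr']]]].
  have Hsa : weak_seq p' (rcons s a) r' by apply/weak_seq_rcons; exists q'.
  have [r [/weak_seq_rcons [q [Hq Hqr]] Hr]] := IH rho rho' Henv _ _ Hr' Hsa.
  by exists q; split=> //; exists a; split=> //; exists r.
- case: Hq' => [Hf|Hg].
  + by have [q [Hq Hf']] := IHf rho rho' Henv s q' Hf Hs'; exists q; split; [|left].
  + by have [q [Hq Hg']] := IHg rho rho' Henv s q' Hg Hs'; exists q; split; [|right].
- set G := lfp (fun S => sem_c f (env_update rho X S)).
  pose G' q' := forall t, weak_seq p' t q' -> exists q, weak_seq p t q /\ G q.
  have simG : dia_sim G G' by move=> t r' HG' Ht; apply: HG'.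
  suff: G' q' by apply.
  apply: Hq' => r' Hr' t Ht.
  have envG := @env_update_rel _ _ dia_sim rho rho' X G G' Henv simG.
  have [q [Hq Hf]] := IH _ _ envG t r' Hr' Ht.
  by exists q; split=> //; apply: lfp_fold Hf; apply: sem_c_update_monotone.
- exact: Henv Hq' Hs'.
Qed.

End Transfer.

Theorem mainTheorem16 (Act : finType) (L L' : LTS Act) (p : L) (p' : L') :
  subsumes p p' ->
  (forall phi : sHML Act, s_closed phi -> s_guarded phi ->
     sem_s phi (@env0 _ L) p -> sem_s phi (@env0 _ L') p') /\
  (forall phi : cHML Act, c_closed phi -> c_guarded phi ->
     ~ sem_c phi (@env0 _ L) p -> ~ sem_c phi (@env0 _ L') p').
Proof.
move=> [trace_incl _]; split.
- move=> phi _ _ Hp.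
  have env_sim : forall X, box_sim p p' (@env0 _ L X) (@env0 _ L' X).
    by move=> X; apply: box_sim_empty.
  by apply: (box_sim_sem trace_incl env_sim (s := [::])) => // q /= <-.
- move=> phi _ _ Hp Hp'.
  have env_sim : forall X, dia_sim p p' (@env0 _ L X) (@env0 _ L' X).
    by move=> X s q' [].
  by have [q [/= <- Hq]] := dia_sim_sem trace_incl env_sim (s := [::]) Hp' erefl.
Qed.
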